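(* For any numbers $\Lambda\geq1$ and $d>0$ there exists a constant $C$ such that the following holds for any $\bar x\in S^2$ and any $\bar r\in(0,\pi/2]$. Let $\rho_{\bar x,\bar r}$ be the conformal factor of the Möbius transform corresponding to a dilation at $\bar x$ that maps $B_{\bar r}(\bar x)$ onto a hemisphere. Then for any $x\in B_{\Lambda\bar r}(\bar x)$ and any $r\in(d\bar r,\bar r)$, \[ \|d\varphi_{x,r}\|_{L^\infty(S^2,\rho_{\bar x,\bar r}^2g_{S^2})}\leq C. \]
   Context: $S^2\subset\mathbb{R}^3$ is the unit sphere with round metric $g_{S^2}$ and $B_r(x)$ denotes a geodesic ball. $(\varphi_{x,r})_{x\in S^2,\,r\in(0,\pi/2]}$ is a fixed family of cut-off functions with $\varphi_{x,r}\in C^\infty_0(B_r(x),[0,1])$, $\varphi_{x,r}\equiv1$ on $B_{r/2}(x)$ and $\|d\varphi_{x,r}\|_{L^\infty(S^2,g_{S^2})}\leq C_*r^{-1}$ for a universal constant $C_*$. The conformal factor of a Möbius transform $M$ is $\rho_M=\frac1{\sqrt2}|\nabla M|$, so that $M^*g_{S^2}=\rho_M^2g_{S^2}$; for $\bar r=\pi/2$ the dilation is the identity and $\rho=1$. *)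

From HB Require Import structures.
From mathcomp Require Import all_boot all_order all_algebra.
From mathcomp Require Import all_classical all_reals all_analysis.
Set Implicit Arguments. Unset Strict Implicit. Unset Printing Implicit Defensive.
Import Order.TTheory GRing.Theory Num.Theory.
Import numFieldNormedType.Exports.
Local Open Scope classical_set_scope.
Local Open Scope ring_scope.

Section S2.
Variable R : realType.
Local Notation pt := 'rV[R]_3.

Definition dot (u v : pt) : R := \sum_(i < 3) u 0 i * v 0 i.

Definition on_S2 (y : pt) : Prop := dot y y = 1.

Definition gdist (x y : pt) : R := acos (dot x y).

Definition gball (x : pt) (r : R) : set pt := [set y | on_S2 y /\ gdist x y < r].

Definition unit_tangent (y v : pt) : Prop := dot y v = 0 /\ dot v v = 1.

(* C^\infty on R^3: a class of everywhere differentiable functions containing F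
   and closed under all directional derivatives *)
Definition smooth3 (F : pt -> R) : Prop :=
  exists S : set (pt -> R), S F /\
    forall G, S G -> (forall p, differentiable G p) /\ (forall v : pt, S ('D_v G)).

(* C^\infty on S^2 = restriction of a smooth function on R^3 *)
Definition smooth_S2 (f : pt -> R) : Prop :=
  exists F, smooth3 F /\ forall y, on_S2 y -> F y = f y.

(* dphi_y(v) for v tangent at y, computed along the great circle
   t |-> cos t y + sin t v *)
Definition dfun (f : pt -> R) (y v : pt) : R :=
  derive1 (fun t : R => f (cos t *: y + sin t *: v)) 0.

(* A w^2 g-unit tangent vector is v / w(y) with v a g-unit tangent vector;
   f is continuous (smooth), so the essential sup is the sup. *)
Definition dLinf_le (w : pt -> R) (f : pt -> R) (C : R) : Prop :=
  forall y v, on_S2 y -> unit_tangent y v -> `|dfun f y v| / w y <= C.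

(* phi in C^\infty_0(B_r(x), [0,1]): smooth, [0,1]-valued, and compact support
   inside B_r(x), i.e. vanishing outside some closed ball of radius r' < r. *)
Definition cutoff_in (x : pt) (r : R) (f : pt -> R) : Prop :=
  [/\ smooth_S2 f,
      (forall y, on_S2 y -> 0 <= f y <= 1) &
      exists2 r', r' < r & forall y, on_S2 y -> r' < gdist x y -> f y = 0].

Definition cutoff_family (Cstar : R) (phi : pt -> R -> pt -> R) : Prop :=
  forall x r, on_S2 x -> 0 < r <= pi / 2 ->
    [/\ cutoff_in x r (phi x r),
        (forall y, gball x (r / 2) y -> phi x r y = 1) &
        dLinf_le (fun _ => 1) (phi x r) (Cstar / r)].

(* Dilation at xbar mapping B_rbar(xbar) onto the hemisphere centred at xbar:
   in stereographic coordinates from -xbar it is z |-> lam z, lam = cot(rbar/2),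
   i.e. M(y) = (((1-lam^2)+(1+lam^2)c) xbar + 2 lam (y - c xbar)) / ((1+lam^2)+(1-lam^2)c)
   with c = y.xbar. Its conformal factor rho_M = |nabla M|/sqrt 2 is: *)
Definition dil_lambda (rbar : R) : R := cos (rbar / 2) / sin (rbar / 2).

Definition rho_dil (xbar : pt) (rbar : R) (y : pt) : R :=
  let lam := dil_lambda rbar in
  2 * lam / ((1 + lam ^+ 2) + (1 - lam ^+ 2) * dot y xbar).

End S2.

(* With lam = cot (rbar / 2) and c = <y, xbar>, the conformal factor is
   rho(y) = 2 lam / ((1 + c) + lam^2 (1 - c)), and 1 <= lam rbar <= 2.  Since
   2 (1 - c) = |y - xbar|^2 is the squared chordal distance, 1 / rho(y) <= rbar (1 + K^2 / 2)
   wherever |y - xbar| <= K rbar.  The derivative of phi_{x,r} vanishes off B_r(x), and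
   on B_r(x) the chordal triangle inequality gives |y - xbar| <= r + Lambda rbar
   <= (Lambda + 1) rbar.  There |d phi|_g <= Cstar / r <= Cstar / (d rbar), so measuring
   with rho^2 g multiplies it by 1 / rho <= rbar (1 + (Lambda + 1)^2 / 2), a factor that
   exactly cancels the 1 / rbar. *)

From HB Require Import structures.
From mathcomp Require Import all_boot all_order all_algebra.
From mathcomp Require Import all_classical all_reals all_analysis.
From mathcomp Require Import lra ring.
Import Order.TTheory GRing.Theory Num.Theory.
Import numFieldNormedType.Exports.
Local Open Scope classical_set_scope.
Local Open Scope ring_scope.

Section RealInequalities.
Context {R : realType}.
Implicit Types a c u : R.

Lemma is_derive_ge0_le {f df : R -> R} {a b : R} : a <= b ->
  (forall x : R, is_derive x (1 : R) f (df x)) -> (forall x, a < x < b -> 0 <= df x) ->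
  f a <= f b.
Proof.
rewrite le_eqVlt => /predU1P[<-//|ab] f_df df_ge0; rewrite -subr_ge0.
have [c] : exists2 c, c \in `]a, b[ & f b - f a = df c * (b - a).
  apply: MVT => //; apply: continuous_subspaceT => x.
  by apply/differentiable_continuous/derivable1_diffP; case: (f_df x).
rewrite in_itv /= => c_ab ->.
by rewrite mulr_ge0 ?df_ge0 // subr_ge0 ltW.
Qed.

Lemma sin_le_id u : 0 <= u -> sin u <= u.
Proof.
move=> u_ge0; rewrite -subr_ge0.
have f_df (x : R) : is_derive x 1 (id - sin : R -> R) (1 - cos x) by exact: is_deriveB.
have := is_derive_ge0_le u_ge0 f_df; rewrite !fctE /= sin0 subr0; apply.
by move=> x _; rewrite subr_ge0 cos_le1.
Qed.

Lemma mul_cos_le_sin u : 0 <= u <= pi -> u * cos u <= sin u.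
Proof.
case/andP=> u_ge0 u_le_pi; rewrite -subr_ge0.
have f_df (x : R) : is_derive x 1 (sin - id * cos : R -> R) (x * sin x).
  by apply: is_derive_eq; rewrite /= ?scaler1 /GRing.scale /=; ring.
have := is_derive_ge0_le u_ge0 f_df; rewrite !fctE /= sin0 mul0r subr0; apply.
move=> x /andP[x_gt0 x_lt_u].
by rewrite mulr_ge0 ?ltW // sin_gt0_pi // x_gt0 (lt_le_trans x_lt_u).
Qed.

Lemma one_sub_cos_le a : 1 - cos a <= a ^+ 2 / 2.
Proof.
wlog a_ge0 : a / 0 <= a.
  move=> wlog_a; have [/wlog_a//|a_lt0] := leP 0 a.
  by rewrite -cosN -sqrrN wlog_a // oppr_ge0 ltW.
have f_df (x : R) : is_derive x 1 (id * id + 2 *: cos : R -> R) (2 * (x - sin x)).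
  by apply: is_derive_eq; rewrite /= ?scaler1 /GRing.scale /=; ring.
have := is_derive_ge0_le a_ge0 f_df; rewrite !fctE /= cos0 mul0r add0r => f_le.
suff : 2 * 1 <= a * a + 2 * cos a by rewrite expr2; lra.
apply: f_le => x /andP[x_gt0 _].
by rewrite mulr_ge0 // subr_ge0 sin_le_id // ltW.
Qed.

Lemma lt_acos a c : -1 <= c <= 1 -> 0 <= a <= pi -> (a < acos c) = (c < cos a).
Proof.
move=> c_range a_range.
have c_itv : c \in `[-1, 1] by rewrite in_itv.
have a_itv : a \in `[0, pi] by rewrite in_itv.
have acos_itv : acos c \in `[0, pi] by rewrite in_itv /= acos_ge0 // acos_lepi.
by rewrite -(ltr_cos a_itv acos_itv) acosK.
Qed.

Lemma dil_lambda_bounds {rbar : R} : 0 < rbar <= pi / 2 ->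
  [/\ 0 < dil_lambda rbar, 1 <= dil_lambda rbar * rbar & dil_lambda rbar * rbar <= 2].
Proof.
case/andP=> rbar_gt0 rbar_le.
have pi_lt4 : pi < 4 :> R by have := @pihalf_lt2 R; lra.
have pi_gt0 : 0 < pi :> R := pi_gt0 R.
set u := rbar / 2.
have u_gt0 : 0 < u by rewrite /u; lra.
have u_le : u <= pi / 4 by rewrite /u; lra.
have sin_gt0 : 0 < sin u by apply: sin_gt0_pihalf; rewrite u_gt0 /=; lra.
have cos_gt0 : 0 < cos u by apply: cos_gt0_pihalf; apply/andP; split; lra.
have sin_le_u : sin u <= u by rewrite sin_le_id ?ltW.
have u_cos_le : u * cos u <= sin u by apply: mul_cos_le_sin; apply/andP; split; lra.
have cos_ge_half : 1 / 2 <= cos u.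
  have := one_sub_cos_le u; have : u ^+ 2 <= 1 by rewrite expr2; nra.
  lra.
have rbarE : rbar = 2 * u by rewrite /u; lra.
rewrite /dil_lambda -/u mulrAC rbarE; split.
- by rewrite divr_gt0.
- by rewrite ler_pdivlMr // mul1r; nra.
- by rewrite ler_pdivrMr //; nra.
Qed.

Lemma rescaled_bound_le (e rho c r rbar d M : R) : 0 <= e -> 0 < d -> 0 < rbar ->
  d * rbar < r -> 0 <= M -> e <= c / r -> rho^-1 <= rbar * M -> e / rho <= `|c| / d * M.
Proof.
move=> e_ge0 d_gt0 rbar_gt0 dr_lt_r M_ge0 e_le inv_rho_le.
have r_gt0 : 0 < r by rewrite (lt_trans _ dr_lt_r) ?mulr_gt0.
have c_div_le : c / r <= `|c| / (d * rbar).
  apply: le_trans (ler_wpM2r _ (ler_norm c)) _; first by rewrite invr_ge0 ltW.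
  by rewrite ler_wpM2l // lef_pV2 ?posrE ?mulr_gt0 // ltW.
apply: le_trans (ler_wpM2l e_ge0 inv_rho_le) _.
apply: le_trans (ler_wpM2r _ (le_trans e_le c_div_le)) _; first by rewrite mulr_ge0 // ltW.
suff -> : `|c| / (d * rbar) * (rbar * M) = `|c| / d * M by [].
by field; rewrite !gt_eqF.
Qed.

End RealInequalities.

Section Sphere.
Context {R : realType}.
Local Notation pt := 'rV[R]_3.
Implicit Types (u v w x y z : pt) (a k : R).

Lemma dotC u v : dot u v = dot v u.
Proof. by apply: eq_bigr => i _; rewrite mulrC. Qed.

Lemma dotDl u v w : dot (u + v) w = dot u w + dot v w.
Proof. by rewrite /dot -big_split; apply: eq_bigr => i _; rewrite mxE mulrDl. Qed.

Lemma dotZl k u w : dot (k *: u) w = k * dot u w.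
Proof. by rewrite /dot mulr_sumr; apply: eq_bigr => i _; rewrite mxE mulrA. Qed.

Lemma dotNl u w : dot (- u) w = - dot u w.
Proof. by rewrite -scaleN1r dotZl mulN1r. Qed.

Lemma dotDr u v w : dot w (u + v) = dot w u + dot w v.
Proof. by rewrite dotC dotDl !(dotC w). Qed.

Lemma dotZr k u w : dot w (k *: u) = k * dot w u.
Proof. by rewrite dotC dotZl dotC. Qed.

Lemma dotNr u w : dot w (- u) = - dot w u.
Proof. by rewrite dotC dotNl dotC. Qed.

Definition dotE := (dotDl, dotDr, dotZl, dotZr, dotNl, dotNr).

Lemma dot_ge0 u : 0 <= dot u u.
Proof. by apply: sumr_ge0 => i _; rewrite -expr2 sqr_ge0. Qed.

Lemma dot_S2_range {x z} : on_S2 x -> on_S2 z -> -1 <= dot x z <= 1.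
Proof.
move=> x_S2 z_S2; have := dot_ge0 (x - z); have := dot_ge0 (x + z).
by rewrite !dotE x_S2 z_S2 (dotC z x) => ? ?; apply/andP; split; lra.
Qed.

Lemma gdistC x y : gdist x y = gdist y x.
Proof. by rewrite /gdist dotC. Qed.

Lemma gdist_ge0 x y : on_S2 x -> on_S2 y -> 0 <= gdist x y.
Proof. by move=> x_S2 y_S2; rewrite acos_ge0 // dot_S2_range. Qed.

Lemma gdist_le_pi x y : on_S2 x -> on_S2 y -> gdist x y <= pi.
Proof. by move=> x_S2 y_S2; rewrite acos_lepi // dot_S2_range. Qed.

Definition chord2 x y : R := dot (x - y) (x - y).

Lemma chord2_S2 x y : on_S2 x -> on_S2 y -> chord2 x y = 2 * (1 - dot x y).
Proof. by move=> x_S2 y_S2; rewrite /chord2 !dotE x_S2 y_S2 (dotC y x); ring. Qed.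

Lemma chord2_le_gdist {x y a} : on_S2 x -> on_S2 y -> gdist x y <= a ->
  chord2 x y <= a ^+ 2.
Proof.
move=> x_S2 y_S2 le_a; have d_ge0 : 0 <= gdist x y by exact: gdist_ge0.
have cos_gdist : cos (gdist x y) = dot x y by rewrite acosK // in_itv dot_S2_range.
have := one_sub_cos_le (gdist x y); rewrite chord2_S2 // cos_gdist.
have : gdist x y ^+ 2 <= a ^+ 2 by rewrite ler_pXn2r // ?nnegrE (le_trans d_ge0).
lra.
Qed.

Lemma dot_le_mul {u w} {A B : R} : 0 < A -> 0 < B ->
  dot u u <= A ^+ 2 -> dot w w <= B ^+ 2 -> dot u w <= A * B.
Proof.
move=> A_gt0 B_gt0 uu_le ww_le; have AB_gt0 : 0 < A * B by rewrite mulr_gt0.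
have := dot_ge0 (B *: u - A *: w); rewrite !dotE (dotC w u) => sq_ge0.
by rewrite -(ler_pM2l AB_gt0); nra.
Qed.

Lemma chord2_triangle {x y z} {A B : R} : 0 < A -> 0 < B ->
  chord2 x y <= A ^+ 2 -> chord2 y z <= B ^+ 2 -> chord2 x z <= (A + B) ^+ 2.
Proof.
rewrite /chord2 -[x - z](subrKA y); move: (x - y) (y - z) => u w A_gt0 B_gt0 uu_le ww_le.
have := dot_le_mul A_gt0 B_gt0 uu_le ww_le.
rewrite dotDl !dotDr (dotC w u); lra.
Qed.

Lemma chord2_le_gdist_add {x y z} {A B : R} : on_S2 x -> on_S2 y -> on_S2 z ->
  0 < A -> 0 < B -> gdist x y <= A -> gdist y z <= B -> chord2 x z <= (A + B) ^+ 2.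
Proof.
move=> x_S2 y_S2 z_S2 A_gt0 B_gt0 xy_le yz_le.
exact: chord2_triangle A_gt0 B_gt0 (chord2_le_gdist x_S2 y_S2 xy_le)
  (chord2_le_gdist y_S2 z_S2 yz_le).
Qed.

Lemma great_circle_S2 y v t : on_S2 y -> unit_tangent y v ->
  on_S2 (cos t *: y + sin t *: v).
Proof.
move=> y_S2 [yv vv]; rewrite /on_S2 !dotE y_S2 vv (dotC v y) yv.
by rewrite -[RHS](cos2Dsin2 t); ring.
Qed.

End Sphere.

Section CutoffAndDilation.
Context {R : realType}.
Local Notation pt := 'rV[R]_3.
Implicit Types (f : pt -> R) (v x y : pt).

Lemma cutoff_support_radius {x} {r : R} {f} : cutoff_in x r f -> 0 < r ->
  exists2 s, 0 <= s < r & forall y, on_S2 y -> s < gdist x y -> f y = 0.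
Proof.
case=> _ _ [r' r'_lt_r f_eq0] r_gt0; exists (Num.max r' 0).
  by rewrite le_max lexx orbT /= gt_max r'_lt_r.
by move=> y y_S2; rewrite gt_max => /andP[r'_lt _]; exact: f_eq0.
Qed.

Lemma dfun_eq0_far {f x} {s : R} {y v} : on_S2 x -> 0 <= s ->
  (forall z, on_S2 z -> s < gdist x z -> f z = 0) ->
  on_S2 y -> unit_tangent y v -> s < gdist x y -> dfun f y v = 0.
Proof.
move=> x_S2 s_ge0 f_eq0 y_S2 v_tan far.
have s_range : 0 <= s <= pi by rewrite s_ge0 (le_trans (ltW far)) ?gdist_le_pi.
have curve_S2 (t : R) : on_S2 (cos t *: y + sin t *: v) by exact: great_circle_S2.
have curve_far : \forall t \near 0, s < gdist x (cos t *: y + sin t *: v).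
  have cont : continuous (fun t : R => cos t * dot x y + sin t * dot x v).
    move=> t; apply: cvgD; apply: cvgM;
      by [exact: continuous_cos | exact: continuous_sin | exact: cvg_cst].
  have := cvgr_lt _ (cont 0) (cos s); rewrite /= cos0 sin0 mul1r mul0r addr0.
  rewrite -lt_acos ?dot_S2_range // => /(_ _ far); apply: filterS => t.
  by rewrite /gdist lt_acos ?dot_S2_range // dotDr !dotZr.
have curve_eq0 : \forall t \near 0, f (cos t *: y + sin t *: v) = cst 0 t.
  by apply: filterS curve_far => t; exact: f_eq0.
by rewrite /dfun derive1E (near_eq_derive _ curve_eq0) derive_cst.
Qed.

Lemma inv_rho_dil_le {xbar} {rbar : R} {y} {K : R} : on_S2 xbar -> on_S2 y ->
  0 < rbar <= pi / 2 -> chord2 y xbar <= (K * rbar) ^+ 2 ->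
  (rho_dil xbar rbar y)^-1 <= rbar * (1 + K ^+ 2 / 2).
Proof.
move=> xbar_S2 y_S2 rbar_range; rewrite chord2_S2 // /rho_dil /=.
have [L_gt0 Lr_ge1 Lr_le2] := dil_lambda_bounds rbar_range.
have /andP[_ c_le1] := dot_S2_range y_S2 xbar_S2.
set L := dil_lambda rbar in L_gt0 Lr_ge1 Lr_le2 *; set c := dot y xbar in c_le1 *.
rewrite invf_div ler_pdivrMr => [chord_le|]; last by rewrite mulr_gt0.
have K2_ge0 : 0 <= K ^+ 2 := sqr_ge0 K.
have : L ^+ 2 * (2 * (1 - c)) <= L ^+ 2 * (K * rbar) ^+ 2 by rewrite ler_wpM2l ?sqr_ge0.
have : (L * rbar) ^+ 2 * K ^+ 2 <= 2 * (L * rbar) * K ^+ 2.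
  by rewrite expr2 ler_wpM2r // ler_wpM2r // (le_trans ler01 Lr_ge1).
lra.
Qed.

End CutoffAndDilation.

Theorem lemma3p1 (R : realType) (Cstar : R) (phi : 'rV[R]_3 -> R -> 'rV[R]_3 -> R)
  (hphi : cutoff_family Cstar phi) (Lambda d : R) (hL : 1 <= Lambda) (hd : 0 < d) :
  exists C : R, forall (xbar : 'rV[R]_3) (rbar : R) (x : 'rV[R]_3) (r : R),
    on_S2 xbar -> 0 < rbar <= pi / 2 ->
    gball xbar (Lambda * rbar) x -> d * rbar < r < rbar ->
    dLinf_le (rho_dil xbar rbar) (phi x r) C.
Proof.
exists (`|Cstar| / d * (1 + (Lambda + 1) ^+ 2 / 2)).
move=> xbar rbar x r xbar_S2 rbar_range [x_S2 x_near] /andP[dr_lt_r r_lt_rbar].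
move=> y v y_S2 v_tan.
have /andP[rbar_gt0 rbar_le] := rbar_range.
have r_gt0 : 0 < r by rewrite (lt_trans _ dr_lt_r) ?mulr_gt0.
have r_range : 0 < r <= pi / 2 by rewrite r_gt0 (le_trans (ltW r_lt_rbar)).
have [phi_cutoff _ dphi_le] := hphi x r x_S2 r_range.
have [s /andP[s_ge0 s_lt_r] phi_eq0] := cutoff_support_radius phi_cutoff r_gt0.
have [far|near] := ltP s (gdist x y).
  rewrite (dfun_eq0_far x_S2 s_ge0 phi_eq0 y_S2 v_tan far) normr0 mul0r.
  by apply: mulr_ge0; [rewrite divr_ge0 // ltW | rewrite addr_ge0 // divr_ge0 // sqr_ge0].
have chord_le : chord2 y xbar <= ((Lambda + 1) * rbar) ^+ 2.
  have Lrbar_gt0 : 0 < Lambda * rbar by rewrite mulr_gt0 // (lt_le_trans ltr01 hL).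
  have near_r : gdist y x <= r by rewrite gdistC (le_trans near) // ltW.
  apply: le_trans (chord2_le_gdist_add y_S2 x_S2 xbar_S2 r_gt0 Lrbar_gt0 near_r _) _.
    by rewrite gdistC ltW.
  by rewrite ler_pXn2r ?nnegrE ?addr_ge0 ?mulr_ge0 ?ltW //; lra.
apply: (rescaled_bound_le _ _ _ r) (inv_rho_dil_le xbar_S2 y_S2 rbar_range chord_le) => //.
- by rewrite addr_ge0 // divr_ge0 // sqr_ge0.
- by have := dphi_le y v y_S2 v_tan; rewrite divr1.
Qed.
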